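(* Let $G$ be a compact group with Haar probability measure $dg$, acting linearly and continuously (i.e. via a continuous homomorphism $G\to GL(V)$) on a finite-dimensional real vector space $V$. Fix a vector $v\in V$ and a linear function $\ell:V\to\mathbb{R}$, and define $f:G\to\mathbb{R}$ by $f(g)=\ell(gv)$. Then $$\|f\|_2\le \|f\|_\infty\le \sqrt{\dim V}\,\|f\|_2 .$$
   Context: For a function $f:G\to\mathbb{R}$, $\|f\|_\infty=\max_{g\in G}|f(g)|$ and, for a positive integer $k$, $\|f\|_{2k}=\left(\int_G f^{2k}(g)\,dg\right)^{1/(2k)}$. *)

From HB Require Import structures.
From mathcomp Require Import all_boot all_order all_algebra.
From mathcomp Require Import all_classical all_reals all_analysis.
Set Implicit Arguments. Unset Strict Implicit. Unset Printing Implicit Defensive.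
Import Order.TTheory GRing.Theory Num.Theory.
Import numFieldNormedType.Exports.
Local Open Scope classical_set_scope.
Local Open Scope ring_scope.

Notation borel_of G := (g_sigma_algebraType (@open G)).

(* ||f||_oo = max_g |f g|, written as the supremum of the values |f g|
   (for continuous f on a compact space the sup is attained, i.e. a max). *)
Definition sup_norm {T : Type} {R : realType} (f : T -> R) : R :=
  sup [set `|f x| | x in [set: T]].

From HB Require Import structures.
From mathcomp Require Import all_boot all_order all_algebra.
From mathcomp Require Import all_classical all_reals all_analysis.
From mathcomp Require Import measurable_realfun ring lra.
Set Implicit Arguments.
Unset Strict Implicit.
Unset Printing Implicit Defensive.

Import Order.TTheory GRing.Theory Num.Theory.
Import numFieldNormedType.Exports.
Local Open Scope classical_set_scope.
Local Open Scope ring_scope.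

(* Averaging [S := v v^T + eps 1] over G gives a positive definite matrix
   [M := \int rho(g) S rho(g)^T dg] with [rho(h) M rho(h)^T = M], so that
   [P := M^-1] satisfies [rho(h)^T P rho(h) = P].  Then
   [tr (P S) = \int tr (P rho(g) S rho(g)^T) dg = tr (P M) = dim V], hence
   [v^T P v <= dim V].  Cauchy-Schwarz for the form of M, applied to [l] and
   [(rho(h) v)^T P], gives
   [f(h)^2 <= (l M l^T) (v^T P v) <= dim V (||f||_2^2 + eps \int |l rho(g)|^2 dg)],
   and eps -> 0 yields the upper bound.  The lower bound holds because mu is a
   probability measure. *)

Section BilinearForm.
Variables (R : realFieldType) (n : nat).
Implicit Types (M : 'M[R]_n) (a b x y : 'rV[R]_n).

Definition mxform M a b : R := (a *m M *m b^T) 0 0.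

Lemma mxform_sym M a b : M^T = M -> mxform M b a = mxform M a b.
Proof.
move=> symM; rewrite /mxform [LHS](_ : _ = ((b *m M *m a^T)^T) 0 0); last by rewrite [RHS]mxE.
by rewrite !trmx_mul trmxK symM mulmxA.
Qed.

Lemma mxformDl M a b x : mxform M (a + b) x = mxform M a x + mxform M b x.
Proof. by rewrite /mxform !mulmxDl mxE. Qed.

Lemma mxformDr M a b x : mxform M x (a + b) = mxform M x a + mxform M x b.
Proof. by rewrite /mxform linearD /= mulmxDr mxE. Qed.

Lemma mxformZl M c a x : mxform M (c *: a) x = c * mxform M a x.
Proof. by rewrite /mxform -!scalemxAl mxE. Qed.

Lemma mxformZr M c a x : mxform M x (c *: a) = c * mxform M x a.
Proof. by rewrite /mxform linearZ /= -scalemxAr mxE. Qed.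

Lemma mxformD M N a b : mxform (M + N) a b = mxform M a b + mxform N a b.
Proof. by rewrite /mxform mulmxDr mulmxDl mxE. Qed.

Lemma mxform_scalar c a b : mxform c%:M a b = c * (a *m b^T) 0 0.
Proof. by rewrite /mxform mul_mx_scalar -scalemxAl mxE. Qed.

Lemma mxform_dyad (u : 'cV[R]_n) a b : mxform (u *m u^T) a b = (a *m u) 0 0 * (b *m u) 0 0.
Proof.
by rewrite /mxform !mulmxA -(mulmxA (a *m u)) -trmx_mul mxE big_ord1 [X in _ * X]mxE.
Qed.

Lemma mxtrace_mul_dyad M (u : 'cV[R]_n) : \tr (M *m (u *m u^T)) = mxform M u^T u^T.
Proof. by rewrite mulmxA mxtrace_mulC mulmxA /mxform trmxK /mxtrace big_ord1. Qed.

Lemma mxform_Cauchy_Schwarz M a b : M^T = M -> (forall x, 0 <= mxform M x x) ->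
  mxform M a b ^+ 2 <= mxform M a a * mxform M b b.
Proof.
move=> symM psdM.
set p := mxform M a a; set q := mxform M a b; set r := mxform M b b.
have quad t : 0 <= p + 2 * t * q + t ^+ 2 * r.
  suff -> : p + 2 * t * q + t ^+ 2 * r = mxform M (a + t *: b) (a + t *: b).
    exact: psdM.
  rewrite !(mxformDl, mxformDr, mxformZl, mxformZr) (mxform_sym a b symM) /p /q /r; ring.
have r_ge0 : 0 <= r by exact: psdM.
have [r0|r_neq0] := eqVneq r 0.
  have [q0|q_neq0] := eqVneq q 0; first by rewrite q0 r0 expr0n mulr0.
  (* a nonzero linear function of t takes negative values *)
  have lin : 2 * (- (p + 1) / (2 * q)) * q = - (p + 1) by field.
  by have := quad (- (p + 1) / (2 * q)); rewrite r0 mulr0 addr0 lin; lra.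
have r_gt0 : 0 < r by rewrite lt_def r_neq0.
have vertex : p + 2 * (- q / r) * q + (- q / r) ^+ 2 * r = (p * r - q ^+ 2) / r.
  by field.
by have := quad (- q / r); rewrite vertex pmulr_lge0 ?invr_gt0 //; lra.
Qed.

Lemma mxform_pd_unitmx M : (forall x, x != 0 -> 0 < mxform M x x) -> M \in unitmx.
Proof.
move=> pdM; rewrite unitmxE unitfE; apply/negP => /det0P [x x_neq0 xM0].
by have := pdM x x_neq0; rewrite /mxform xM0 mul0mx mxE ltxx.
Qed.

Lemma mxform_invmxr M a y : M \in unitmx -> M^T = M ->
  mxform M a (y *m invmx M) = (a *m y^T) 0 0.
Proof.
move=> uM symM.
by rewrite /mxform trmx_mul trmx_inv symM !mulmxA -(mulmxA a) mulmxV // mulmx1.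
Qed.

Lemma mxform_invmx M x y : M \in unitmx -> M^T = M ->
  mxform M (x *m invmx M) (y *m invmx M) = mxform (invmx M) x y.
Proof. by move=> uM symM; rewrite mxform_invmxr // /mxform mulmxA. Qed.

Lemma mxtrace_ge0_psd M : (forall x, 0 <= mxform M x x) -> 0 <= \tr M.
Proof.
move=> psdM; apply: sumr_ge0 => i _.
have := psdM (delta_mx 0 i).
by rewrite /mxform -rowE trmx_delta -colE !mxE.
Qed.

End BilinearForm.

Lemma dotmx_ge0 (R : realDomainType) n (y : 'rV[R]_n) : 0 <= (y *m y^T) 0 0.
Proof. by rewrite mxE; apply: sumr_ge0 => i _; rewrite mxE -expr2 sqr_ge0. Qed.

Lemma dotmx_gt0 (R : realDomainType) n (y : 'rV[R]_n) : y != 0 -> 0 < (y *m y^T) 0 0.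
Proof.
move=> y_neq0; rewrite lt_def dotmx_ge0 andbT; apply: contra y_neq0.
rewrite mxE psumr_eq0 => [/allP y0|k _]; last by rewrite mxE -expr2 sqr_ge0.
apply/eqP/matrixP => i j; rewrite (ord1 i) !mxE.
by have := y0 j (mem_index_enum j); rewrite /= !mxE -expr2 sqrf_eq0 => /eqP.
Qed.

Lemma ler_of_forall_addZ (R : realFieldType) (a b c : R) : 0 <= c ->
  (forall eps, 0 < eps -> a <= b + eps * c) -> a <= b.
Proof.
move=> c_ge0 le_ab; apply/ler_addgt0Pr => d d_gt0.
have c1_gt0 : 0 < c + 1 by rewrite ltr_wpDl.
apply: (le_trans (le_ab _ (divr_gt0 d_gt0 c1_gt0))); rewrite lerD2l.
by rewrite mulrAC ler_pdivrMr // ler_pM2l //; lra.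
Qed.

Lemma continuous_borel_measurable_map (T U : ptopologicalType) (F : T -> U) :
  continuous F -> measurable_fun [set: borel_of T] (F : borel_of T -> borel_of U).
Proof.
move=> /continuousP cF.
apply: (@measurability _ _ (borel_of T) (borel_of U) _ _ (@open U)); first reflexivity.
move=> _ [A oA <-]; apply: measurableI => //; apply: sub_sigma_algebra; exact: cF.
Qed.

Lemma continuous_borel_measurable (R : realType) (T : ptopologicalType) (F : T -> R) :
  continuous F -> measurable_fun [set: borel_of T] F.
Proof.
move=> /continuousP cF.
apply: (measurability _ (RGenOpens.measurableE R)).
move=> _ [_ [a [b ->] <-]]; apply: measurableI => //.
by apply: sub_sigma_algebra; apply: cF; exact: interval_open.
Qed.

Lemma continuous_sum (T : topologicalType) (R : numFieldType) (I : Type)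
    (s : seq I) (F : I -> T -> R) :
  (forall i, continuous (F i)) -> continuous (fun x => \sum_(i <- s) F i x).
Proof.
move=> cF; elim: s => [|i s IHs].
  by under eq_fun do rewrite big_nil; exact: cst_continuous.
under eq_fun do rewrite big_cons.
by move=> x; apply: continuousD; [exact: cF | exact: IHs].
Qed.

Lemma continuousM_fun (T : topologicalType) (R : numFieldType) (F1 F2 : T -> R) :
  continuous F1 -> continuous F2 -> continuous (fun x => F1 x * F2 x).
Proof. by move=> c1 c2 x; apply: continuousM; [exact: c1 | exact: c2]. Qed.

Lemma Rintegral_cst_probability d (T : measurableType d) (R : realType)
    (P : probability T R) (c : R) :
  \int[P]_x c = c.
Proof.
by rewrite Rintegral_cst // (congr1 fine (probability_setT P)) mulr1.
Qed.
Arguments Rintegral_cst_probability {d T R} P c.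

Lemma Rintegral_sqr_le_probability d (T : measurableType d) (R : realType)
    (P : probability T R) (F : T -> R) (c : R) :
  P.-integrable [set: T] (EFin \o (fun x => F x ^+ 2)) ->
  (forall x, `|F x| <= c) -> \int[P]_x F x ^+ 2 <= c ^+ 2.
Proof.
move=> iF2 F_le; rewrite -[c ^+ 2](Rintegral_cst_probability P).
apply: le_Rintegral => // [|x _]; first exact: finite_measure_integrable_cst.
by rewrite -real_normK ?num_real // lerXn2r ?nnegrE ?(le_trans _ (F_le x)).
Qed.

Lemma Lnorm2_Rintegral d (T : measurableType d) (R : realType)
    (mu : {measure set T -> \bar R}) (F : T -> R) :
  mu.-integrable [set: T] (EFin \o (fun x => F x ^+ 2)) ->
  ('N[mu]_2[EFin \o F] = (Num.sqrt (\int[mu]_x F x ^+ 2))%:E)%E.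
Proof.
move=> iF2; rewrite unlock /=.
under eq_integral => x _ do rewrite powR_mulrn // real_normK ?num_real //.
rewrite -(fineK (integrable_fin_num measurableT iF2)) -/(Rintegral _ _ _).
by rewrite poweR_EFin powR12_sqrt // Rintegral_ge0 // => x _; exact: sqr_ge0.
Qed.

Section SupNorm.
Variables (T : Type) (R : realType) (f : T -> R) (c : R).
Hypothesis f_le : forall x, `|f x| <= c.

Lemma le_sup_norm x : `|f x| <= sup_norm f.
Proof. by apply: ub_le_sup; [exists c => _ [y _ <-]; exact: f_le | exists x]. Qed.

Lemma sup_norm_le (x : T) : sup_norm f <= c.
Proof. by apply: ge_sup; [exists `|f x|, x | move=> _ [y _ <-]]. Qed.

End SupNorm.

Section CompactProbabilitySpace.
Variables (R : realType) (G : ptopologicalType).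
Hypothesis G_compact : compact [set: G].
Variable mu : probability (borel_of G) R.

Lemma continuous_bounded (F : G -> R) : continuous F -> [bounded F x | x in [set: G]].
Proof.
move=> cF; have := compact_bounded (continuous_compact (continuous_subspaceT cF) G_compact).
rewrite /bounded_near => /= FG; apply: filterS FG => M FM x _; apply: FM; by exists x.
Qed.

Lemma continuous_integrable (F : G -> R) : continuous F ->
  mu.-integrable [set: borel_of G] (EFin \o F).
Proof.
move=> cF; apply: measurable_bounded_integrable => //.
- by apply: (le_lt_trans (probability_le1 mu _)); rewrite ?ltry.
- exact: continuous_borel_measurable.
- exact: continuous_bounded.
Qed.

Lemma Rintegral_sum (I : Type) (s : seq I) (F : I -> G -> R) :
  (forall i, continuous (F i)) ->
  \int[mu]_x (\sum_(i <- s) F i x) = \sum_(i <- s) \int[mu]_x F i x.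
Proof.
move=> cF; elim: s => [|i s IHs].
  by under eq_Rintegral do rewrite big_nil; rewrite big_nil Rintegral_cst_probability.
under eq_Rintegral do rewrite big_cons.
rewrite big_cons -IHs RintegralD //; apply: continuous_integrable => //.
exact: continuous_sum.
Qed.

Lemma Rintegral_gt0 (F : G -> R) : continuous F -> (forall x, 0 < F x) ->
  0 < \int[mu]_x F x.
Proof.
move=> cF F_gt0.
have cVF : continuous (fun x => (F x)^-1).
  by move=> x; apply: continuousV; [rewrite gt_eqF | exact: cF].
have [M M_gt0 VF_le] := pinfty_ex_gt0 (continuous_bounded cVF).
have F_ge x : M^-1 <= F x.
  rewrite -[F x]invrK lef_pV2 ?posrE ?invr_gt0 //.
  by apply: le_trans (VF_le x I); rewrite ler_norm.
apply: (@lt_le_trans _ _ M^-1); first by rewrite invr_gt0.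
rewrite -[M^-1](Rintegral_cst_probability mu).
apply: le_Rintegral => //.
- exact/continuous_integrable/cst_continuous.
- exact: continuous_integrable.
Qed.

Definition mx_continuous p q (X : G -> 'M[R]_(p, q)) :=
  forall i j, continuous (fun x => X x i j).

Definition mx_integral p q (X : G -> 'M[R]_(p, q)) : 'M[R]_(p, q) :=
  \matrix_(i, j) \int[mu]_x X x i j.

Lemma mx_continuous_cst p q (A : 'M[R]_(p, q)) : mx_continuous (fun=> A).
Proof. by move=> i j; exact: cst_continuous. Qed.
Arguments mx_continuous_cst {p q} A.

Lemma mx_continuous_mul p q r (X : G -> 'M[R]_(p, q)) (Y : G -> 'M[R]_(q, r)) :
  mx_continuous X -> mx_continuous Y -> mx_continuous (fun x => X x *m Y x).
Proof.
move=> cX cY i j; under eq_fun do rewrite mxE.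
by apply: continuous_sum => k; apply: continuousM_fun.
Qed.

Lemma mx_continuous_tr p q (X : G -> 'M[R]_(p, q)) :
  mx_continuous X -> mx_continuous (fun x => (X x)^T).
Proof. by move=> cX i j; under eq_fun do rewrite mxE; exact: cX. Qed.

Lemma mulmx_integrall m p q (A : 'M[R]_(m, p)) (X : G -> 'M[R]_(p, q)) :
  mx_continuous X -> A *m mx_integral X = mx_integral (fun x => A *m X x).
Proof.
move=> cX; apply/matrixP => i j; rewrite !mxE.
under [RHS]eq_Rintegral do rewrite mxE.
rewrite Rintegral_sum => [|k]; last exact/continuousM_fun/cX/cst_continuous.
apply: eq_bigr => k _; rewrite mxE RintegralZl //; exact/continuous_integrable/cX.
Qed.

Lemma mulmx_integralr m p q (X : G -> 'M[R]_(m, p)) (B : 'M[R]_(p, q)) :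
  mx_continuous X -> mx_integral X *m B = mx_integral (fun x => X x *m B).
Proof.
move=> cX; apply/matrixP => i j; rewrite !mxE.
under [RHS]eq_Rintegral do rewrite mxE.
rewrite Rintegral_sum => [|k]; last exact/continuousM_fun/cst_continuous/cX.
apply: eq_bigr => k _; rewrite mxE RintegralZr //; exact/continuous_integrable/cX.
Qed.

Lemma trmx_integral p q (X : G -> 'M[R]_(p, q)) :
  (mx_integral X)^T = mx_integral (fun x => (X x)^T).
Proof.
apply/matrixP => i j; rewrite !mxE.
by under [RHS]eq_Rintegral do rewrite mxE.
Qed.

Lemma mxtrace_integral p (X : G -> 'M[R]_p) :
  mx_continuous X -> \tr (mx_integral X) = \int[mu]_x \tr (X x).
Proof.
move=> cX; rewrite Rintegral_sum => [|k]; last exact: cX.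
by apply: eq_bigr => k _; rewrite mxE.
Qed.

Section HaarMeasure.
Variables (mul : G -> G -> G) (inv : G -> G) (e : G).
Hypotheses (mulA : associative mul) (mul1g : left_id e mul)
  (mulVg : forall x, mul (inv x) x = e)
  (mul_cont : continuous (fun p : G * G => mul p.1 p.2))
  (mu_haar : forall (g : G) (A : set (borel_of G)),
      measurable A -> mu [set mul g x | x in A] = mu A).

Lemma mulgV x : mul x (inv x) = e.
Proof.
set y := mul x (inv x).
have yy : mul y y = y by rewrite /y -mulA (mulA (inv x)) mulVg mul1g.
by rewrite -[y]mul1g -(mulVg y) -mulA yy.
Qed.

Lemma continuous_mull h : continuous (mul h).
Proof.
move=> x; apply: (@continuous_comp _ _ _ (fun x => (h, x)) (fun p => mul p.1 p.2)).
  exact: cvg_pair (cvg_cst _) cvg_id.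
exact: mul_cont.
Qed.

Lemma pushforward_mull h (A : set (borel_of G)) : measurable A ->
  pushforward mu (mul h : borel_of G -> borel_of G) A = mu A.
Proof.
move=> mA; rewrite /pushforward -(mu_haar (inv h) mA); congr (mu _).
apply/seteqP; split => x /=.
  by move=> Ax; exists (mul h x) => //; rewrite mulA mulVg mul1g.
by move=> [y Ay <-]; rewrite mulA mulgV mul1g.
Qed.

Lemma Rintegral_mull h (F : G -> R) : continuous F ->
  \int[mu]_x F (mul h x) = \int[mu]_x F x.
Proof.
move=> cF; have mL := continuous_borel_measurable_map (@continuous_mull h).
rewrite /Rintegral; congr fine.
rewrite [RHS](eq_measure_integral (pushforward mu (mul h : borel_of G -> borel_of G))).
  rewrite integral_pushforward //.
  - by apply/measurable_EFinP; exact: continuous_borel_measurable.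
  - apply: continuous_integrable.
    by move=> x; apply: continuous_comp; [exact: continuous_mull | exact: cF].
by move=> A mA _; symmetry; exact: pushforward_mull.
Qed.

Lemma mx_integral_mull h p q (X : G -> 'M[R]_(p, q)) : mx_continuous X ->
  mx_integral (fun x => X (mul h x)) = mx_integral X.
Proof. by move=> cX; apply/matrixP => i j; rewrite !mxE; exact: (Rintegral_mull h (cX i j)). Qed.

Section Representation.
Variables (n : nat) (rho : G -> 'M[R]_n).
Hypotheses (rho_mul : forall a b, rho (mul a b) = rho a *m rho b)
  (rho_e : rho e = 1%:M) (rho_cont : continuous rho).

Lemma mx_continuous_rho : mx_continuous rho.
Proof.
move=> i j x; apply: (@continuous_comp _ _ _ rho (fun M : 'M[R]_n => M i j)).
  exact: rho_cont.
exact: coord_continuous.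
Qed.

Lemma rho_mulV g : rho g *m rho (inv g) = 1%:M.
Proof. by rewrite -rho_mul mulgV rho_e. Qed.

Lemma rho_mulVg g : rho (inv g) *m rho g = 1%:M.
Proof. by rewrite -rho_mul mulVg rho_e. Qed.

Section AveragedForm.
Variable S : 'M[R]_n.

Definition avg_mx := mx_integral (fun g => rho g *m S *m (rho g)^T).

Lemma mx_continuous_conj : mx_continuous (fun g => rho g *m S *m (rho g)^T).
Proof.
apply: mx_continuous_mul; last exact/mx_continuous_tr/mx_continuous_rho.
exact/mx_continuous_mul/mx_continuous_cst/mx_continuous_rho.
Qed.

Lemma continuous_form_avg (x : 'rV[R]_n) :
  continuous (fun g => mxform S (x *m rho g) (x *m rho g)).
Proof.
have cxrho := mx_continuous_mul (mx_continuous_cst x) mx_continuous_rho.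
have cxrhoS := mx_continuous_mul cxrho (mx_continuous_cst S).
by have /(_ 0 0) := mx_continuous_mul cxrhoS (mx_continuous_tr cxrho).
Qed.

Lemma avg_mx_invariant h : rho h *m avg_mx *m (rho h)^T = avg_mx.
Proof.
rewrite /avg_mx mulmx_integrall; last exact: mx_continuous_conj.
rewrite mulmx_integralr; last exact/mx_continuous_mul/mx_continuous_conj/mx_continuous_cst.
rewrite -(mx_integral_mull h mx_continuous_conj); congr mx_integral; apply: funext => g.
by rewrite rho_mul trmx_mul !mulmxA.
Qed.

Lemma avg_mx_sym : S^T = S -> avg_mx^T = avg_mx.
Proof.
move=> symS; rewrite trmx_integral; congr mx_integral; apply: funext => g.
by rewrite !trmx_mul trmxK symS mulmxA.
Qed.

Lemma mxform_avg_mx x :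
  mxform avg_mx x x = \int[mu]_g mxform S (x *m rho g) (x *m rho g).
Proof.
rewrite /mxform mulmx_integrall; last exact: mx_continuous_conj.
rewrite mulmx_integralr; last exact/mx_continuous_mul/mx_continuous_conj/mx_continuous_cst.
by rewrite mxE; apply: eq_Rintegral => g _; rewrite trmx_mul !mulmxA.
Qed.

Hypothesis avg_mx_unit : avg_mx \in unitmx.

Lemma invmx_avg_mx_invariant h : (rho h)^T *m invmx avg_mx *m rho h = invmx avg_mx.
Proof.
set Q := (rho h)^T *m invmx avg_mx *m rho h.
have rhoM : rho h *m avg_mx = avg_mx *m (rho (inv h))^T.
  by rewrite -{1}(avg_mx_invariant (inv h)) !mulmxA rho_mulV mul1mx.
have QM : Q *m avg_mx = 1%:M.
  rewrite /Q -mulmxA rhoM mulmxA -(mulmxA _ _ avg_mx) mulVmx // mulmx1.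
  by rewrite -trmx_mul rho_mulVg trmx1.
by rewrite -[Q]mulmx1 -(mulmxV avg_mx_unit) mulmxA QM mul1mx.
Qed.

(* by invariance of [invmx avg_mx], the trace of the integrand is
   [\tr ((rho g)^T *m invmx avg_mx *m rho g *m S) = \tr (invmx avg_mx *m S)] *)
Lemma mxtrace_invmx_avg_mx : \tr (invmx avg_mx *m S) = n%:R.
Proof.
have <- : \tr (invmx avg_mx *m avg_mx) = n%:R by rewrite mulVmx // mxtrace1.
rewrite mulmx_integrall; last exact: mx_continuous_conj.
rewrite mxtrace_integral; last exact/mx_continuous_mul/mx_continuous_conj/mx_continuous_cst.
under eq_Rintegral => g _ do
  rewrite !mulmxA mxtrace_mulC !mulmxA invmx_avg_mx_invariant.
by rewrite Rintegral_cst_probability.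
Qed.

End AveragedForm.

Lemma avg_mx_psd S : (forall y, 0 <= mxform S y y) ->
  forall x, 0 <= mxform (avg_mx S) x x.
Proof. by move=> psdS x; rewrite mxform_avg_mx; apply: Rintegral_ge0 => g _. Qed.

Lemma avg_mx_pd S : (forall y, y != 0 -> 0 < mxform S y y) ->
  forall x, x != 0 -> 0 < mxform (avg_mx S) x x.
Proof.
move=> pdS x x_neq0; rewrite mxform_avg_mx.
apply: Rintegral_gt0 => [|g]; first exact: continuous_form_avg.
apply: pdS; apply: contra x_neq0 => /eqP xrho0.
by rewrite -(mulmx1 x) -(rho_mulV g) mulmxA xrho0 mul0mx.
Qed.

Variable v : 'cV[R]_n.

Lemma mxform_dyadD_scalar eps y :
  mxform (v *m v^T + eps%:M) y y = (y *m v) 0 0 ^+ 2 + eps * (y *m y^T) 0 0.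
Proof. by rewrite mxformD mxform_dyad mxform_scalar expr2. Qed.

Lemma sqr_coef_le_avg eps l h : 0 < eps ->
  (l *m (rho h *m v)) 0 0 ^+ 2 <= n%:R * mxform (avg_mx (v *m v^T + eps%:M)) l l.
Proof.
move=> eps_gt0; set S := v *m v^T + eps%:M; set M := avg_mx S; set P := invmx M.
have psdM : forall x, 0 <= mxform M x x.
  apply: avg_mx_psd => y; rewrite mxform_dyadD_scalar.
  by rewrite addr_ge0 ?sqr_ge0 // mulr_ge0 ?dotmx_ge0 // ltW.
have uM : M \in unitmx.
  apply/mxform_pd_unitmx/avg_mx_pd => y y_neq0; rewrite mxform_dyadD_scalar.
  by rewrite ltr_wpDl ?sqr_ge0 // mulr_gt0 ?dotmx_gt0.
have symM : M^T = M.
  by apply: avg_mx_sym; rewrite /S linearD /= trmx_mul trmxK tr_scalar_mx.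
have vPv_le : mxform P v^T v^T <= n%:R.
  have trP_ge0 : 0 <= \tr P.
    by apply: mxtrace_ge0_psd => x; rewrite -mxform_invmx //; exact: psdM.
  rewrite -(mxtrace_invmx_avg_mx uM) mulmxDr mxtraceD mxtrace_mul_dyad.
  by rewrite mul_mx_scalar mxtraceZ lerDl mulr_ge0 // ltW.
set w := rho h *m v.
have Mlb : mxform M l (w^T *m P) = (l *m w) 0 0 by rewrite mxform_invmxr // trmxK.
have Mbb : mxform M (w^T *m P) (w^T *m P) = mxform P v^T v^T.
  rewrite mxform_invmx // /mxform /w !trmx_mul !trmxK !mulmxA.
  by rewrite -(mulmxA _ (rho h)^T) -(mulmxA _ _ (rho h)) invmx_avg_mx_invariant.
have := mxform_Cauchy_Schwarz l (w^T *m P) symM psdM.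
rewrite Mlb Mbb mulrC => /le_trans; apply.
by rewrite ler_wpM2r.
Qed.

Lemma continuous_sqr_coef (l : 'rV[R]_n) :
  continuous (fun g => (l *m (rho g *m v)) 0 0 ^+ 2).
Proof.
have /(_ 0 0) c := mx_continuous_mul (mx_continuous_cst l)
  (mx_continuous_mul mx_continuous_rho (mx_continuous_cst v)).
by under eq_fun do rewrite expr2; exact: continuousM_fun.
Qed.

Lemma sqr_coef_le (l : 'rV[R]_n) h :
  (l *m (rho h *m v)) 0 0 ^+ 2 <= n%:R * \int[mu]_g (l *m (rho g *m v)) 0 0 ^+ 2.
Proof.
have cl := mx_continuous_mul (mx_continuous_cst l) mx_continuous_rho.
have /(_ 0 0) c_dot := mx_continuous_mul cl (mx_continuous_tr cl).
set C := \int[mu]_g (l *m rho g *m (l *m rho g)^T) 0 0.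
apply: (@ler_of_forall_addZ _ _ _ (n%:R * C)).
  by rewrite mulr_ge0 // Rintegral_ge0 // => g _; exact: dotmx_ge0.
move=> eps eps_gt0; apply: (le_trans (sqr_coef_le_avg l h eps_gt0)).
rewrite mxform_avg_mx.
under eq_Rintegral do rewrite mxform_dyadD_scalar -(mulmxA l _ v).
have c_eps_dot : continuous (fun g => eps * (l *m rho g *m (l *m rho g)^T) 0 0).
  by apply: continuousM_fun => //; exact: cst_continuous.
rewrite RintegralD ?RintegralZl -/C //; try exact: continuous_integrable.
- by rewrite mulrDr mulrCA.
- exact/continuous_integrable/continuous_sqr_coef.
Qed.

End Representation.
End HaarMeasure.
End CompactProbabilitySpace.

Theorem theorem1p2 (R : realType) (G : ptopologicalType)
  (mul : G -> G -> G) (inv : G -> G) (e : G)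
  (mulA : associative mul) (mul1g : left_id e mul)
  (mulVg : forall x, mul (inv x) x = e)
  (mul_cont : continuous (fun p : G * G => mul p.1 p.2))
  (inv_cont : continuous inv)
  (G_hausdorff : hausdorff_space G) (G_compact : compact [set: G])
  (mu : probability (borel_of G) R)
  (mu_haar : forall (g : G) (A : set (borel_of G)),
      measurable A -> mu [set mul g x | x in A] = mu A)
  (n : nat) (rho : G -> 'M[R]_n)
  (rho_mul : forall a b, rho (mul a b) = rho a *m rho b)
  (rho_e : rho e = 1%:M)
  (rho_cont : continuous rho)
  (v : 'cV[R]_n) (l : 'rV[R]_n) :
  let f : borel_of G -> R := fun g => (l *m (rho g *m v)) 0 0 in
  ('N[mu]_2[EFin \o f] <= (sup_norm f)%:E <=
     (Num.sqrt n%:R)%:E * 'N[mu]_2[EFin \o f])%E.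
Proof.
cbv zeta; set f := fun g : borel_of G => (l *m (rho g *m v)) 0 0.
have f_le h : `|f h| <= Num.sqrt n%:R * Num.sqrt (\int[mu]_g f g ^+ 2).
  rewrite -sqrtrM // -sqrtr_sqr ler_sqrt ?mulr_ge0 ?Rintegral_ge0 // => [|g _].
    exact: sqr_coef_le.
  exact: sqr_ge0.
rewrite Lnorm2_Rintegral; last exact/continuous_integrable/continuous_sqr_coef.
rewrite !lee_fin (sup_norm_le f_le e) andbT.
have sup_ge0 : 0 <= sup_norm f := le_trans (normr_ge0 _) (le_sup_norm f_le e).
rewrite -(ger0_norm sup_ge0) -sqrtr_sqr ler_sqrt ?sqr_ge0 //.
apply: Rintegral_sqr_le_probability; first exact/continuous_integrable/continuous_sqr_coef.
exact: le_sup_norm.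
Qed.
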